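(* Let $c_1, c_2$ be \textsc{Imp} commands, $\Phi,\Psi$ relational assertions, and $r$ a \textsc{CoreRel} aligned command. If $\langle\!\langle c_1\mid c_2\rangle\!\rangle \equiv r$ and $\vdash \{\Phi\}\ [\![r]\!]\ \{\Psi\}$ is derivable in the \textsc{Imp} program logic, then $\models_R \{\Phi\}\ c_1 \otimes c_2\ \{\Psi\}$.
   Context: \textsc{Imp} is the imperative language with integer expressions $a ::= n \mid x \mid a+a \mid a-a \mid a*a$, Boolean expressions $b ::= \mathsf{true}\mid\mathsf{false}\mid a=a \mid a<a \mid \neg b \mid b\wedge b$, and commands $c ::= \mathsf{skip} \mid c;c \mid x:=a \mid \mathsf{while}\ b\ c \mid \mathsf{if}\ b\ \mathsf{then}\ c\ \mathsf{else}\ c$. States are partial functions from identifiers to integers; $\sigma,c\Downarrow\sigma'$ is standard big-step semantics. $\vdash\{\phi\}\,c\,\{\psi\}$ denotes derivability in a standard (sound) Hoare logic for partial correctness of \textsc{Imp}, parameterized over an assertion language with satisfaction $\sigma\models\phi$. Relational assertions refer to variables of the left and right programs via subscripts $1$ and $2$ (e.g. $x_1 > x_2$); for states $\sigma_1,\sigma_2$ of the two programs, $\sigma_1\uplus\sigma_2$ is the combined state over the disjoint (left/right renamed) variable spaces. Relational safety: $\models_R\{\Phi\}\,c_1\otimes c_2\,\{\Psi\}$ iff for all $\sigma_1,\sigma_2$ with $\sigma_1\uplus\sigma_2\models\Phi$, and all $\sigma_1',\sigma_2'$ with $\sigma_1,c_1\Downarrow\sigma_1'$ and $\sigma_2,c_2\Downarrow\sigma_2'$,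 we have $\sigma_1'\uplus\sigma_2'\models\Psi$. \textsc{CoreRel} aligned commands are $r ::= \langle\!\langle c \mid c\rangle\!\rangle \mid r ;; r \mid \mathsf{if}_R\ \langle\!\langle b\mid b\rangle\!\rangle\ \mathsf{then}\ r\ \mathsf{else}\ r \mid \mathsf{while}_R\ \langle\!\langle b \mid b\rangle\!\rangle\ r$, with big-step semantics $(\sigma_1,\sigma_2),r\Downarrow_R(\sigma_1',\sigma_2')$: $\langle\!\langle c_1\mid c_2\rangle\!\rangle$ runs $c_1$ on $\sigma_1$ and $c_2$ on $\sigma_2$ independently; $r_1;;r_2$ runs $r_1$ then $r_2$; $\mathsf{if}_R\langle\!\langle b_1\mid b_2\rangle\!\rangle\,\mathsf{then}\,r_1\,\mathsf{else}\,r_2$ runs $r_1$ if $b_1$ is true in $\sigma_1$ and $b_2$ is true in $\sigma_2$, and runs $r_2$ if either is false; $\mathsf{while}_R\langle\!\langle b_1\mid b_2\rangle\!\rangle\,r$ stops (leaving the states unchanged) as soon as either $b_1$ is false in the left state or $b_2$ is false in the right state, and otherwise runs $r$ and repeats. $r_1\equiv r_2$ iff for all $\sigma_1,\sigma_2,\sigma_1',\sigma_2'$, $(\sigma_1,\sigma_2),r_1\Downarrow_R(\sigma_1',\sigma_2')\Leftrightarrow(\sigma_1,\sigma_2),r_2\Downarrow_R(\sigma_1',\sigma_2')$. Reification $[\![\cdot]\!]$ into \textsc{Imp}, using renamings $[\![\cdot]\!]_L,[\![\cdot]\!]_R$ that map left/right variables to disjoint identifier sets (left variable $x\mapsto x_1$,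 right $x\mapsto x_2$): $[\![\langle\!\langle s_1\mid s_2\rangle\!\rangle]\!] = [\![s_1]\!]_L;[\![s_2]\!]_R$; $[\![r_1;;r_2]\!]=[\![r_1]\!];[\![r_2]\!]$; $[\![\mathsf{while}_R\langle\!\langle b_1\mid b_2\rangle\!\rangle\,r]\!]=\mathsf{while}\ ([\![b_1]\!]_L\wedge[\![b_2]\!]_R)\ [\![r]\!]$; $[\![\mathsf{if}_R\langle\!\langle b_1\mid b_2\rangle\!\rangle\,\mathsf{then}\,r_1\,\mathsf{else}\,r_2]\!]=\mathsf{if}\ ([\![b_1]\!]_L\wedge[\![b_2]\!]_R)\ \mathsf{then}\ [\![r_1]\!]\ \mathsf{else}\ [\![r_2]\!]$. *)

From Stdlib Require Import ZArith Arith.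
Open Scope Z_scope.

Definition ident := nat.

Inductive aexp : Type :=
  | ANum (n : Z)
  | AId (x : ident)
  | APlus (a1 a2 : aexp)
  | AMinus (a1 a2 : aexp)
  | AMult (a1 a2 : aexp).

Inductive bexp : Type :=
  | BTrue
  | BFalse
  | BEq (a1 a2 : aexp)
  | BLt (a1 a2 : aexp)
  | BNot (b : bexp)
  | BAnd (b1 b2 : bexp).

Inductive com : Type :=
  | CSkip
  | CSeq (c1 c2 : com)
  | CAsgn (x : ident) (a : aexp)
  | CWhile (b : bexp) (c : com)
  | CIf (b : bexp) (c1 c2 : com).

Definition state := ident -> option Z.

Definition upd (s : state) (x : ident) (n : Z) : state :=
  fun y => if Nat.eqb y x then Some n else s y.

Fixpoint aeval (s : state) (a : aexp) : option Z :=
  match a with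
  | ANum n => Some n
  | AId x => s x
  | APlus a1 a2 =>
      match aeval s a1, aeval s a2 with Some n1, Some n2 => Some (n1 + n2) | _, _ => None end
  | AMinus a1 a2 =>
      match aeval s a1, aeval s a2 with Some n1, Some n2 => Some (n1 - n2) | _, _ => None end
  | AMult a1 a2 =>
      match aeval s a1, aeval s a2 with Some n1, Some n2 => Some (n1 * n2) | _, _ => None end
  end.

Fixpoint beval (s : state) (b : bexp) : option bool :=
  match b with
  | BTrue => Some true
  | BFalse => Some false
  | BEq a1 a2 =>
      match aeval s a1, aeval s a2 with Some n1, Some n2 => Some (Z.eqb n1 n2) | _, _ => None end
  | BLt a1 a2 =>
      match aeval s a1, aeval s a2 with Some n1, Some n2 => Some (Z.ltb n1 n2) | _, _ => None end
  | BNot b1 =>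
      match beval s b1 with Some v => Some (negb v) | None => None end
  | BAnd b1 b2 =>
      match beval s b1, beval s b2 with
      | Some false, _ => Some false
      | _, Some false => Some false
      | Some true, Some true => Some true
      | _, _ => None
      end
  end.

Inductive ceval : state -> com -> state -> Prop :=
  | E_Skip s : ceval s CSkip s
  | E_Seq s c1 s1 c2 s2 : ceval s c1 s1 -> ceval s1 c2 s2 -> ceval s (CSeq c1 c2) s2
  | E_Asgn s x a n : aeval s a = Some n -> ceval s (CAsgn x a) (upd s x n)
  | E_WhileFalse s b c : beval s b = Some false -> ceval s (CWhile b c) s
  | E_WhileTrue s b c s1 s2 :
      beval s b = Some true -> ceval s c s1 -> ceval s1 (CWhile b c) s2 ->
      ceval s (CWhile b c) s2
  | E_IfTrue s b c1 c2 s' : beval s b = Some true -> ceval s c1 s' -> ceval s (CIf b c1 c2) s'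
  | E_IfFalse s b c1 c2 s' : beval s b = Some false -> ceval s c2 s' -> ceval s (CIf b c1 c2) s'.

Definition assertion := state -> Prop.

Inductive derivable : assertion -> com -> assertion -> Prop :=
  | H_Skip P : derivable P CSkip P
  | H_Seq P Q R c1 c2 : derivable P c1 Q -> derivable Q c2 R -> derivable P (CSeq c1 c2) R
  | H_Asgn Q x a :
      derivable (fun s => forall n, aeval s a = Some n -> Q (upd s x n)) (CAsgn x a) Q
  | H_If P Q b c1 c2 :
      derivable (fun s => P s /\ beval s b = Some true) c1 Q ->
      derivable (fun s => P s /\ beval s b = Some false) c2 Q ->
      derivable P (CIf b c1 c2) Q
  | H_While P b c :
      derivable (fun s => P s /\ beval s b = Some true) c P ->
      derivable P (CWhile b c) (fun s => P s /\ beval s b = Some false)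
  | H_Conseq P P' Q Q' c :
      (forall s, P s -> P' s) -> derivable P' c Q' -> (forall s, Q' s -> Q s) ->
      derivable P c Q.

(** * Renamings of left/right variables into disjoint identifier sets *)
Definition renL (x : ident) : ident := (2 * x)%nat.
Definition renR (x : ident) : ident := (2 * x + 1)%nat.

Fixpoint ren_a (f : ident -> ident) (a : aexp) : aexp :=
  match a with
  | ANum n => ANum n
  | AId x => AId (f x)
  | APlus a1 a2 => APlus (ren_a f a1) (ren_a f a2)
  | AMinus a1 a2 => AMinus (ren_a f a1) (ren_a f a2)
  | AMult a1 a2 => AMult (ren_a f a1) (ren_a f a2)
  end.

Fixpoint ren_b (f : ident -> ident) (b : bexp) : bexp :=
  match b with
  | BTrue => BTrue
  | BFalse => BFalse
  | BEq a1 a2 => BEq (ren_a f a1) (ren_a f a2)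
  | BLt a1 a2 => BLt (ren_a f a1) (ren_a f a2)
  | BNot b1 => BNot (ren_b f b1)
  | BAnd b1 b2 => BAnd (ren_b f b1) (ren_b f b2)
  end.

Fixpoint ren_c (f : ident -> ident) (c : com) : com :=
  match c with
  | CSkip => CSkip
  | CSeq c1 c2 => CSeq (ren_c f c1) (ren_c f c2)
  | CAsgn x a => CAsgn (f x) (ren_a f a)
  | CWhile b c1 => CWhile (ren_b f b) (ren_c f c1)
  | CIf b c1 c2 => CIf (ren_b f b) (ren_c f c1) (ren_c f c2)
  end.

(** Combined state sigma1 ⊎ sigma2 over the renamed variable spaces. *)
Definition combine (s1 s2 : state) : state :=
  fun y => if Nat.even y then s1 (Nat.div2 y) else s2 (Nat.div2 y).

Inductive rcom : Type :=
  | RPair (c1 c2 : com)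
  | RSeq (r1 r2 : rcom)
  | RIf (b1 b2 : bexp) (r1 r2 : rcom)
  | RWhile (b1 b2 : bexp) (r : rcom).

Inductive rceval : state -> state -> rcom -> state -> state -> Prop :=
  | R_Pair s1 s2 c1 c2 s1' s2' :
      ceval s1 c1 s1' -> ceval s2 c2 s2' -> rceval s1 s2 (RPair c1 c2) s1' s2'
  | R_Seq s1 s2 r1 r2 t1 t2 u1 u2 :
      rceval s1 s2 r1 t1 t2 -> rceval t1 t2 r2 u1 u2 -> rceval s1 s2 (RSeq r1 r2) u1 u2
  | R_IfTrue s1 s2 b1 b2 r1 r2 s1' s2' :
      beval s1 b1 = Some true -> beval s2 b2 = Some true ->
      rceval s1 s2 r1 s1' s2' -> rceval s1 s2 (RIf b1 b2 r1 r2) s1' s2'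
  | R_IfFalse s1 s2 b1 b2 r1 r2 s1' s2' :
      (beval s1 b1 = Some false \/ beval s2 b2 = Some false) ->
      rceval s1 s2 r2 s1' s2' -> rceval s1 s2 (RIf b1 b2 r1 r2) s1' s2'
  | R_WhileFalse s1 s2 b1 b2 r :
      (beval s1 b1 = Some false \/ beval s2 b2 = Some false) ->
      rceval s1 s2 (RWhile b1 b2 r) s1 s2
  | R_WhileTrue s1 s2 b1 b2 r t1 t2 u1 u2 :
      beval s1 b1 = Some true -> beval s2 b2 = Some true ->
      rceval s1 s2 r t1 t2 -> rceval t1 t2 (RWhile b1 b2 r) u1 u2 ->
      rceval s1 s2 (RWhile b1 b2 r) u1 u2.

Definition requiv (r1 r2 : rcom) : Prop :=
  forall s1 s2 s1' s2', rceval s1 s2 r1 s1' s2' <-> rceval s1 s2 r2 s1' s2'.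

Fixpoint reify (r : rcom) : com :=
  match r with
  | RPair c1 c2 => CSeq (ren_c renL c1) (ren_c renR c2)
  | RSeq r1 r2 => CSeq (reify r1) (reify r2)
  | RIf b1 b2 r1 r2 => CIf (BAnd (ren_b renL b1) (ren_b renR b2)) (reify r1) (reify r2)
  | RWhile b1 b2 r1 => CWhile (BAnd (ren_b renL b1) (ren_b renR b2)) (reify r1)
  end.

Definition rel_valid (Phi : assertion) (c1 c2 : com) (Psi : assertion) : Prop :=
  forall s1 s2 s1' s2',
    Phi (combine s1 s2) -> ceval s1 c1 s1' -> ceval s2 c2 s2' -> Psi (combine s1' s2').

(* Reification is a faithful simulation: every run of an aligned command [r]
   from [(s1, s2)] to [(t1, t2)] is a run of the Imp program [reify r] from
   [combine s1 s2] to [combine t1 t2], because the left and right renamings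
   address disjoint halves of the combined state.  A pair of runs of [c1] and
   [c2] is a run of [RPair c1 c2], hence of the equivalent [r], hence of
   [reify r], and soundness of the Hoare logic carries [Phi] to [Psi]. *)
From Stdlib Require Import ZArith Lia FunctionalExtensionality.
Local Open Scope nat_scope.

Lemma derivable_sound (P : assertion) (c : com) (Q : assertion) :
  derivable P c Q -> forall s s', ceval s c s' -> P s -> Q s'.
Proof.
  induction 1; intros s s' Hrun HP.
  - inversion Hrun; subst; auto.
  - inversion Hrun; subst; eauto.
  - inversion Hrun; subst; eauto.
  - inversion Hrun; subst; eauto.
  - remember (CWhile b c) as w eqn:Ew. revert Ew HP.
    induction Hrun; intros Ew HP; inversion Ew; subst; eauto.
  - eauto.
Qed.

Lemma beval_BAnd_true (s : state) (b1 b2 : bexp) :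
  beval s b1 = Some true -> beval s b2 = Some true ->
  beval s (BAnd b1 b2) = Some true.
Proof. intros H1 H2; simpl; rewrite H1, H2; reflexivity. Qed.

Lemma beval_BAnd_false (s : state) (b1 b2 : bexp) :
  beval s b1 = Some false \/ beval s b2 = Some false ->
  beval s (BAnd b1 b2) = Some false.
Proof.
  simpl; intros [H | H]; rewrite H; [reflexivity |].
  destruct (beval s b1) as [[] |]; reflexivity.
Qed.

Section Renaming.

Variable f : ident -> ident.
Variable emb : state -> state.
Hypothesis emb_ren : forall s x, emb s (f x) = s x.
Hypothesis upd_emb_ren : forall s x n, upd (emb s) (f x) n = emb (upd s x n).

Lemma aeval_ren (s : state) (a : aexp) : aeval (emb s) (ren_a f a) = aeval s a.
Proof. induction a; simpl; try rewrite IHa1, IHa2; auto. Qed.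

Lemma beval_ren (s : state) (b : bexp) : beval (emb s) (ren_b f b) = beval s b.
Proof.
  induction b; simpl; try rewrite IHb; try rewrite IHb1, IHb2;
    try rewrite !aeval_ren; reflexivity.
Qed.

Lemma ceval_ren (s : state) (c : com) (s' : state) :
  ceval s c s' -> ceval (emb s) (ren_c f c) (emb s').
Proof.
  induction 1; simpl.
  - constructor.
  - econstructor; eauto.
  - rewrite <- upd_emb_ren. constructor. rewrite aeval_ren; assumption.
  - apply E_WhileFalse. rewrite beval_ren; assumption.
  - eapply E_WhileTrue; eauto. rewrite beval_ren; assumption.
  - apply E_IfTrue; auto. rewrite beval_ren; assumption.
  - apply E_IfFalse; auto. rewrite beval_ren; assumption.
Qed.

End Renaming.

Lemma combine_renL (s1 s2 : state) (x : ident) : combine s1 s2 (renL x) = s1 x.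
Proof.
  unfold combine, renL.
  rewrite Nat.even_mul, Nat.div2_double; reflexivity.
Qed.

Lemma combine_renR (s1 s2 : state) (x : ident) : combine s1 s2 (renR x) = s2 x.
Proof.
  unfold combine, renR.
  rewrite Nat.add_1_r, Nat.even_succ, Nat.odd_mul, Nat.div2_succ_double.
  reflexivity.
Qed.

Lemma upd_combine_renL (s1 s2 : state) (x : ident) (n : Z) :
  upd (combine s1 s2) (renL x) n = combine (upd s1 x n) s2.
Proof.
  apply functional_extensionality; intro y.
  destruct (Nat.Even_or_Odd y) as [[k ->] | [k ->]]; unfold upd at 1.
  - change (2 * k) with (renL k). rewrite !combine_renL. unfold upd, renL.
    destruct (Nat.eqb_spec (2 * k) (2 * x)), (Nat.eqb_spec k x); auto; lia.
  - change (2 * k + 1) with (renR k). rewrite !combine_renR. unfold renR, renL.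
    destruct (Nat.eqb_spec (2 * k + 1) (2 * x)); auto; lia.
Qed.

Lemma upd_combine_renR (s1 s2 : state) (x : ident) (n : Z) :
  upd (combine s1 s2) (renR x) n = combine s1 (upd s2 x n).
Proof.
  apply functional_extensionality; intro y.
  destruct (Nat.Even_or_Odd y) as [[k ->] | [k ->]]; unfold upd at 1.
  - change (2 * k) with (renL k). rewrite !combine_renL. unfold renR, renL.
    destruct (Nat.eqb_spec (2 * k) (2 * x + 1)); auto; lia.
  - change (2 * k + 1) with (renR k). rewrite !combine_renR. unfold upd, renR.
    destruct (Nat.eqb_spec (2 * k + 1) (2 * x + 1)), (Nat.eqb_spec k x); auto; lia.
Qed.

Lemma beval_combine_renL (s1 s2 : state) (b : bexp) :
  beval (combine s1 s2) (ren_b renL b) = beval s1 b.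
Proof. exact (beval_ren renL (fun s => combine s s2) (fun s => combine_renL s s2) s1 b). Qed.

Lemma beval_combine_renR (s1 s2 : state) (b : bexp) :
  beval (combine s1 s2) (ren_b renR b) = beval s2 b.
Proof. exact (beval_ren renR (combine s1) (combine_renR s1) s2 b). Qed.

Lemma ceval_reify (s1 s2 : state) (r : rcom) (t1 t2 : state) :
  rceval s1 s2 r t1 t2 -> ceval (combine s1 s2) (reify r) (combine t1 t2).
Proof.
  induction 1; simpl.
  - apply E_Seq with (combine s1' s2).
    + apply (ceval_ren renL (fun s => combine s s2)); auto.
      * intros; apply combine_renL.
      * intros; apply upd_combine_renL.
    + apply (ceval_ren renR (combine s1')); auto.
      * apply combine_renR.
      * apply upd_combine_renR.
  - econstructor; eauto.
  - apply E_IfTrue; auto. apply beval_BAnd_true;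
      rewrite ?beval_combine_renL, ?beval_combine_renR; assumption.
  - apply E_IfFalse; auto. apply beval_BAnd_false;
      rewrite beval_combine_renL, beval_combine_renR; assumption.
  - apply E_WhileFalse. apply beval_BAnd_false;
      rewrite beval_combine_renL, beval_combine_renR; assumption.
  - eapply E_WhileTrue; eauto. apply beval_BAnd_true;
      rewrite ?beval_combine_renL, ?beval_combine_renR; assumption.
Qed.

Theorem corollary3p5 (c1 c2 : com) (Phi Psi : assertion) (r : rcom) :
  requiv (RPair c1 c2) r ->
  derivable Phi (reify r) Psi ->
  rel_valid Phi c1 c2 Psi.
Proof.
  intros Hequiv Hderiv s1 s2 s1' s2' HPhi Hrun1 Hrun2.
  assert (Hrel : rceval s1 s2 r s1' s2') by (apply Hequiv; constructor; assumption).
  exact (derivable_sound _ _ _ Hderiv _ _ (ceval_reify _ _ _ _ _ Hrel) HPhi).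
Qed.
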